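(* In the Baxter monoid ${\mathsf{baxt}}$, the relation $\sim_o$ coincides with $\equiv_{\mathrm{ev}}$: for $s,t\in{\mathsf{baxt}}$, there exist $g,h\in{\mathsf{baxt}}$ with $sg=gt$ and $hs=th$ if and only if $s$ and $t$ have the same evaluation.
   Context: Let $\mathcal{A}=\{1<2<3<\cdots\}$ be the ordered alphabet of positive integers. For a monoid $M$ and $x,y\in M$, write $x\sim_o y$ iff there exist $g,h\in M$ with $xg=gy$ and $hx=yh$. The evaluation of a word $w$ is the tuple $(|w|_a)_{a}$ giving the number of occurrences of each letter $a$; the monoid below is defined by evaluation-preserving relations, so the evaluation of an element is well defined, and $s\equiv_{\mathrm{ev}} t$ means $s$ and $t$ have the same evaluation. The Baxter monoid ${\mathsf{baxt}}$ is $\mathcal{A}^*$ modulo the congruence generated by the relations $cudavb=cuadvb$ for letters $a\le b<c\le d$ and words $u,v\in\mathcal{A}^*$, and $budavc=buadvc$ for letters $a<b\le c<d$ and words $u,v\in\mathcal{A}^*$. (A known fact that may be used: if $p,q\in\mathcal{A}^*$ have the same evaluation then $ppq=pqq$ and $qpp=qqp$ in ${\mathsf{baxt}}$.) *)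

From mathcomp Require Import all_boot.
From Stdlib Require Import Relations.
Set Implicit Arguments. Unset Strict Implicit. Unset Printing Implicit Defensive.

Definition word := seq nat.
Definition is_word (w : word) : bool := all (fun a => 0 < a) w.

Inductive baxt_rel : word -> word -> Prop :=
| baxt_rel1 (a b c d : nat) (u v : word) :
    a <= b -> b < c -> c <= d ->
    baxt_rel ([:: c] ++ u ++ [:: d; a] ++ v ++ [:: b])
             ([:: c] ++ u ++ [:: a; d] ++ v ++ [:: b])
| baxt_rel2 (a b c d : nat) (u v : word) :
    a < b -> b <= c -> c < d ->
    baxt_rel ([:: b] ++ u ++ [:: d; a] ++ v ++ [:: c])
             ([:: b] ++ u ++ [:: a; d] ++ v ++ [:: c]).

Inductive baxt_step : word -> word -> Prop :=
| baxt_step_ctx (p q x y : word) :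
    baxt_rel x y -> baxt_step (p ++ x ++ q) (p ++ y ++ q).

Definition baxt_eq : word -> word -> Prop := clos_refl_sym_trans word baxt_step.

Definition baxt_sim_o (x y : word) : Prop :=
  (exists g, is_word g /\ baxt_eq (x ++ g) (g ++ y)) /\
  (exists h, is_word h /\ baxt_eq (h ++ x) (y ++ h)).

Definition same_ev (x y : word) : Prop := forall a : nat, count_mem a x = count_mem a y.

From Stdlib Require Import Relations.
From mathcomp Require Import all_boot.

(* The relations preserve evaluation, so [sg = gt] forces [s] and [t] to be
   permutations of each other.  Conversely, two adjacent letters [x], [y]
   commute in baxt as soon as both occur somewhere to their left and somewhere
   to their right: the larger one on the left and the smaller one on the right
   are the outer letters [c], [b] of the first defining relation.  Hence a factor
   may be permuted freely when all its letters occur on both sides of it, which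
   gives [s (s t) = (s t) t] and [(t s) s = t (t s)] whenever [s], [t] have the
   same evaluation. *)

Lemma same_ev_perm (s t : word) : same_ev s t <-> perm_eq s t.
Proof.
split=> [ev | /permP ev a]; last exact: ev.
by apply/allP => a _; rewrite /= ev.
Qed.

Lemma baxt_eq_perm (w1 w2 : word) : baxt_eq w1 w2 -> perm_eq w1 w2.
Proof.
elim=> [_ _ [p q x y r] | w | w1' w2' _ | w1' w2' w3 _ p12 _ p23].
- rewrite perm_cat2l perm_cat2r.
  by case: r => *; rewrite 2!perm_cat2l perm_cat2r; apply/permP => P /=; rewrite addnCA.
- exact: perm_refl.
- by rewrite perm_sym.
- exact: perm_trans p12 p23.
Qed.

Lemma baxt_swap_lt (L R : word) (x y : nat) : y < x -> x \in L -> y \in R ->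
  baxt_eq (L ++ x :: y :: R) (L ++ y :: x :: R).
Proof.
move=> ltyx /splitPr[L1 L2] /splitPr[R1 R2]; apply: rst_step.
have split_rel z1 z2 : (L1 ++ x :: L2) ++ z1 :: z2 :: R1 ++ y :: R2
    = L1 ++ ([:: x] ++ L2 ++ [:: z1; z2] ++ R1 ++ [:: y]) ++ R2.
  by rewrite -!catA.
by rewrite !split_rel; constructor; apply: baxt_rel1.
Qed.

Lemma baxt_swap (L R : word) (x y : nat) :
  x \in L -> y \in L -> x \in R -> y \in R ->
  baxt_eq (L ++ x :: y :: R) (L ++ y :: x :: R).
Proof.
move=> xL yL xR yR; case: (ltngtP x y) => [ltxy | ltyx | ->].
- by apply: rst_sym; apply: baxt_swap_lt.
- exact: baxt_swap_lt.
- exact: rst_refl.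
Qed.

Lemma baxt_move_across (W L R : word) (x : nat) :
  {subset x :: W <= L} -> {subset x :: W <= R} ->
  baxt_eq (L ++ x :: W ++ R) (L ++ W ++ x :: R).
Proof.
elim: W L => [|w W IH] L sL sR /=; first exact: rst_refl.
have wL : w \in L by apply: sL; rewrite !inE eqxx orbT.
have wR : w \in R by apply: sR; rewrite !inE eqxx orbT.
apply: (rst_trans _ _ _ (L ++ w :: x :: W ++ R)); first apply: baxt_swap.
- by apply: sL; rewrite mem_head.
- exact: wL.
- by rewrite mem_cat sR ?mem_head ?orbT.
- by rewrite mem_cat wR orbT.
have sub : {subset x :: W <= [:: x, w & W]}.
  by move=> z; rewrite !inE => /orP[] ->; rewrite ?orbT.
have := IH (L ++ [:: w]); rewrite -!catA; apply.
- by move=> z /sub zxwW; rewrite mem_cat sL.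
- by move=> z /sub /sR.
Qed.

Lemma baxt_perm_between (M M' L R : word) : perm_eq M M' ->
  {subset M <= L} -> {subset M <= R} -> baxt_eq (L ++ M ++ R) (L ++ M' ++ R).
Proof.
elim: M M' L => [|x M IH] M' L pM sL sR.
  by move: pM; rewrite perm_sym => /perm_nilP->; apply: rst_refl.
have xM' : x \in M' by rewrite -(perm_mem pM) mem_head.
case/splitPr: xM' pM => M1 M2 pM.
have sM1 : {subset M1 <= x :: M} by move=> z zM1; rewrite (perm_mem pM) mem_cat zM1.
have pM12 : perm_eq M (M1 ++ M2).
  by rewrite -(perm_cons x) (permPl pM) -cat1s perm_catCA.
apply: rst_trans (_ : baxt_eq _ (L ++ x :: M1 ++ M2 ++ R)) _.
  have := IH _ (L ++ [:: x]) pM12; rewrite -!catA; apply.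
  - by move=> z zM; rewrite mem_cat sL ?inE ?zM ?orbT.
  - by move=> z zM; rewrite sR ?inE ?zM ?orbT.
rewrite -catA /=; apply: baxt_move_across.
- by move=> z /predU1P[-> | /sM1]; apply: sL; rewrite ?mem_head.
- by move=> z /predU1P[-> | /sM1 zM]; rewrite mem_cat sR ?mem_head ?orbT.
Qed.

Theorem mainTheorem10 (s t : seq nat) :
  is_word s -> is_word t -> (baxt_sim_o s t <-> same_ev s t).
Proof.
move=> ws wt; split=> [[[g [_ /baxt_eq_perm sg_gt]] _] | /same_ev_perm pst].
  by apply/same_ev_perm; rewrite -(perm_cat2l g) perm_catC.
have sub_st : {subset s <= t} by move=> z; rewrite (perm_mem pst).
have wst : is_word (s ++ t) by rewrite /is_word all_cat; apply/andP.
have wts : is_word (t ++ s) by rewrite /is_word all_cat; apply/andP.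
split.
- exists (s ++ t); split=> //.
  by rewrite -catA; apply: baxt_perm_between.
- exists (t ++ s); split=> //.
  by rewrite -catA; apply: baxt_perm_between.
Qed.
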